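(* Let $\mathbb{F}$ be an infinite field of arbitrary characteristic. Let $A_1,A_2,A_3,A_4,B_1,B_2,B_3,B_4\in M(2)$ satisfy: $\mathrm{tr}(A_i)=\mathrm{tr}(B_i)$ and $\det(A_i)=\det(B_i)$ for $1\le i\le 4$; $\mathrm{tr}(A_iA_j)=\mathrm{tr}(B_iB_j)$ for $1\le i<j\le 4$; and $\mathrm{tr}(A_iA_jA_k)=\mathrm{tr}(B_iB_jB_k)$ for $1\le i<j<k\le 4$. Then $\mathrm{tr}(A_1A_2A_3A_4)=\mathrm{tr}(B_1B_2B_3B_4)$.
   Context: $M(2)$ is the space of $2\times 2$ matrices over $\mathbb{F}$. *)

From HB Require Import structures.
From mathcomp Require Import all_boot all_order all_algebra.
Set Implicit Arguments. Unset Strict Implicit. Unset Printing Implicit Defensive.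
Import GRing.Theory.
Local Open Scope ring_scope.

Definition infinite_field (F : fieldType) : Prop :=
  forall s : seq F, exists x : F, x \notin s.

From HB Require Import structures.
From mathcomp Require Import all_boot all_order all_algebra.
From mathcomp Require Import ring.
Import GRing.Theory.
Local Open Scope ring_scope.

(* Both 2 tr(A0 A1 A2 A3) and tr(A0 A1 A2 A3)^2 are integer polynomials in the
   traces, determinants and traces of products of two and three of the A_i;
   the first alone says nothing in characteristic 2.  Two elements of a domain
   with equal squares and equal doubles are equal, since
   (a - b)^2 = (a^2 - b^2) - b (2a - 2b).  So the field need not be infinite. *)

Section Mx22.
Variable R : comPzRingType.
Implicit Types X Y : 'M[R]_2.

Lemma lift0_mx22 : lift ord0 ord0 = ord_max :> 'I_2.
Proof. exact: val_inj. Qed.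

Lemma mxtrace_mx22 X : \tr X = X ord0 ord0 + X ord_max ord_max.
Proof. by rewrite /mxtrace 2!big_ord_recl big_ord0 addr0 lift0_mx22. Qed.

Lemma det_mx22 X :
  \det X = X ord0 ord0 * X ord_max ord_max - X ord0 ord_max * X ord_max ord0.
Proof.
rewrite (expand_det_row _ ord0) 2!big_ord_recl big_ord0 addr0.
rewrite /cofactor !det_mx11 !mxE /= lift0_mx22.
have -> : lift ord_max (0 : 'I_1) = ord0 :> 'I_2 by exact: val_inj.
by rewrite expr0 expr1; ring.
Qed.

Lemma mulmx_mx22E X Y i j :
  (X *m Y) i j = X i ord0 * Y ord0 j + X i ord_max * Y ord_max j.
Proof. by rewrite mxE 2!big_ord_recl big_ord0 addr0 lift0_mx22. Qed.

End Mx22.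

Section TraceOfFourProduct.
Variables (R : comPzRingType) (A0 A1 A2 A3 : 'M[R]_2).

Local Notation t0 := (\tr A0).
Local Notation t1 := (\tr A1).
Local Notation t2 := (\tr A2).
Local Notation t3 := (\tr A3).
Local Notation d0 := (\det A0).
Local Notation d1 := (\det A1).
Local Notation d2 := (\det A2).
Local Notation d3 := (\det A3).
Local Notation p01 := (\tr (A0 *m A1)).
Local Notation p02 := (\tr (A0 *m A2)).
Local Notation p03 := (\tr (A0 *m A3)).
Local Notation p12 := (\tr (A1 *m A2)).
Local Notation p13 := (\tr (A1 *m A3)).
Local Notation p23 := (\tr (A2 *m A3)).
Local Notation q012 := (\tr (A0 *m A1 *m A2)).
Local Notation q013 := (\tr (A0 *m A1 *m A3)).
Local Notation q023 := (\tr (A0 *m A2 *m A3)).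
Local Notation q123 := (\tr (A1 *m A2 *m A3)).

Lemma mxtrace_mul4_double :
  2 * \tr (A0 *m A1 *m A2 *m A3) =
    p01 * p23 - p02 * p13 + p03 * p12
  + t0 * q123 + t1 * q023 + t2 * q013 + t3 * q012
  - t0 * t1 * p23 - t0 * t3 * p12 - t1 * t2 * p03 - t2 * t3 * p01
  + t0 * t1 * t2 * t3.
Proof. by rewrite !mxtrace_mx22 !mulmx_mx22E; ring. Qed.

Lemma mxtrace_mul4_sqr :
  \tr (A0 *m A1 *m A2 *m A3) ^+ 2 =
    p23 * q012 * q013 - p12 * q013 * q023 - p02 * q013 * q123
  + 2 * p03 * q012 * q123 + p01 * p03 * p12 * p23
  + d3 * q012 ^+ 2 - d2 * q013 ^+ 2 - d2 * d3 * p01 ^+ 2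
  - t3 * p03 * p12 * q012 + t3 * p02 * p12 * q013 + d2 * t3 * p01 * q013
  + t2 * p03 * p12 * q013 - t2 * p02 * p13 * q013 + t2 * p01 * p23 * q013
  + t2 * d3 * p01 * q012 - t2 * t3 * q012 * q013 - t2 * t3 * p01 * p03 * p12
  + t2 ^+ 2 * q013 ^+ 2 - t2 ^+ 2 * t3 * p01 * q013
  + 3 * d1 * p02 * p03 * p23 - d1 * t3 * p02 * q023
  + 2 * d1 * d3 * p02 ^+ 2 + 2 * d1 * d2 * p03 ^+ 2
  - 2 * d1 * t2 * t3 * p02 * p03
  - t1 * p02 * p23 * q013 + t1 * p01 * p23 * q023 + t1 * t3 * q012 * q023
  - t1 * d2 * p03 * q013 + t1 * t2 * q013 * q023 - t1 * t2 * p01 * p03 * p23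
  - 2 * t1 * p03 * p23 * q012 - 2 * t1 * d3 * p02 * q012
  + t1 * t2 * t3 * p03 * q012 + t1 * t2 * t3 * p02 * q013
  - t1 * t2 * t3 * p01 * q023 - t1 * t2 ^+ 2 * p03 * q013
  + t1 * t2 ^+ 2 * t3 * p01 * p03
  - d0 * p12 * p13 * p23 - d0 * t3 * p12 * q123 + d0 * t3 ^+ 2 * p12 ^+ 2
  - d0 * t2 * t3 * p12 * p13 + 2 * d0 * t2 * p13 * q123
  - 2 * d0 * d3 * p12 ^+ 2 - 2 * d0 * d2 * p13 ^+ 2
  + d0 * t1 * p23 * q123 + d0 * t1 * d2 * t3 * p13 - d0 * t1 * t2 * p13 * p23
  - d0 * t1 * t2 * t3 * q123 + d0 * t1 * t2 ^+ 2 * t3 * p13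
  - d0 * t1 ^+ 2 * p23 ^+ 2 - d0 * t1 ^+ 2 * t2 ^+ 2 * t3 ^+ 2
  + 2 * d0 * t1 * t2 * d3 * p12 + 2 * d0 * t1 ^+ 2 * t2 * t3 * p23
  + d0 * d1 * p23 ^+ 2 - d0 * d1 * d2 * t3 ^+ 2
  - 3 * d0 * d1 * t2 * t3 * p23 - 3 * d0 * d1 * t2 ^+ 2 * d3
  + 4 * d0 * d1 * d2 * d3 + 2 * d0 * d1 * t2 ^+ 2 * t3 ^+ 2
  + t0 * d2 * p13 * q013 - t0 * d1 * p23 * q023
  - t0 * d1 * d2 * t3 * p03 + t0 * d1 * t2 * t3 * q023.
Proof. by rewrite !mxtrace_mx22 !det_mx22 !mulmx_mx22E; ring. Qed.

End TraceOfFourProduct.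

Lemma eq_of_sqr_double (R : idomainType) (a b : R) :
  a ^+ 2 = b ^+ 2 -> 2 * a = 2 * b -> a = b.
Proof.
move=> eq_sqr eq_double; apply/eqP; rewrite -subr_eq0 -sqrf_eq0.
have -> : (a - b) ^+ 2 = (a ^+ 2 - b ^+ 2) - b * (2 * a - 2 * b) by ring.
by rewrite eq_sqr eq_double !subrr mulr0 subr0.
Qed.

Theorem proposition1 (F : fieldType) (hF : infinite_field F)
  (A B : 'I_4 -> 'M[F]_2)
  (htr : forall i : 'I_4, \tr (A i) = \tr (B i))
  (hdet : forall i : 'I_4, \det (A i) = \det (B i))
  (htr2 : forall i j : 'I_4, (i < j)%N -> \tr (A i *m A j) = \tr (B i *m B j))
  (htr3 : forall i j k : 'I_4, (i < j)%N -> (j < k)%N ->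
          \tr (A i *m A j *m A k) = \tr (B i *m B j *m B k)) :
  \tr (A (inord 0) *m A (inord 1) *m A (inord 2) *m A (inord 3))
  = \tr (B (inord 0) *m B (inord 1) *m B (inord 2) *m B (inord 3)).
Proof.
apply: eq_of_sqr_double; rewrite ?(mxtrace_mul4_sqr, mxtrace_mul4_double).
all: by rewrite !htr ?hdet !htr3 ?htr2 // !inordK.
Qed.
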